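(* Fix $g\ge0$ and $n\ge0$. There is a bijection from the set of ordered rooted trees $T$ with $n+1$ vertices satisfying $\max_{0\le i<n}\operatorname{dist}_T(i,i+1)\le g+1$ to the set of quadruples $(m,L,R,M)$ such that - $m$ is a non-negative integer, - $L=(L_1,\dots,L_m)$ is an $m$-tuple of ordered rooted trees of depth at most $\lfloor g/2\rfloor$, - $R=(R_1,\dots,R_m)$ is an $m$-tuple of ordered rooted trees of depth at most $\lceil g/2\rceil$, - $M$ is an ordered rooted tree of depth at most $\lceil g/2\rceil$ if $m=0$, and of depth exactly $\lceil g/2\rceil$ otherwise, and the total number of vertices of the trees in $L$, $R$ and $M$ is $n+1+m$.
   Context: An ordered rooted tree is an unlabeled rooted tree (with at least one vertex) together with a linear order on the children of each vertex. A rooted tree with vertex set $\{0,\dots,n\}$ is naturally labeled if labels increase towards the root and, for each $i$, all children of $i$ have labels smaller than all children of $i+1$. Each ordered rooted tree with $n+1$ vertices has a unique naturally labeled labeling by $\{0,\dots,n\}$ for which the children of each vertex are ordered by increasing label; vertices of $T$ are identified with these labels, and $\operatorname{dist}_T(i,j)$ is the number of edges on the path between $i$ and $j$. The depth of a rooted tree is the maximal number of edges on a path from the root to a vertex. *)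

From mathcomp Require Import all_boot.
Set Implicit Arguments. Unset Strict Implicit. Unset Printing Implicit Defensive.

Inductive otree : Type := ONode of seq otree.

Fixpoint osize (t : otree) : nat :=
  let: ONode ts := t in (sumn (map osize ts)).+1.

Fixpoint odepth (t : otree) : nat :=
  let: ONode ts := t in foldr maxn 0 (map (fun s => (odepth s).+1) ts).

(* Vertices are identified with their addresses: the sequence of child
   indices (0-based) on the path from the root.  [olevel t d] lists the
   addresses of the vertices at depth d, in left-to-right (lexicographic)
   order. *)
Fixpoint olevel (t : otree) (d : nat) : seq (seq nat) :=
  match t, d with
  | ONode _, 0 => [:: [::]]
  | ONode ts, d'.+1 =>
      (fix aux (i : nat) (us : seq otree) : seq (seq nat) :=
         match us with
         | [::] => [::]
         | s :: us' => map (cons i) (olevel s d') ++ aux i.+1 us'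
         end) 0 ts
  end.

(* The natural labeling: labels increase towards the root and, for each i,
   children of i have smaller labels than children of i+1, children ordered
   by increasing label.  This is the reverse breadth-first order: deepest
   level first, each level in left-to-right order.  [onat_vertices t] lists
   the vertices (addresses) in order of their labels 0, 1, ..., n. *)
Definition onat_vertices (t : otree) : seq (seq nat) :=
  flatten (rev (mkseq (olevel t) (odepth t).+1)).

Fixpoint lcp (a b : seq nat) : nat :=
  match a, b with
  | x :: a', y :: b' => if x == y then (lcp a' b').+1 else 0
  | _, _ => 0
  end.

Definition addr_dist (a b : seq nat) : nat :=
  size a + size b - (lcp a b).*2.

Definition odist (t : otree) (i j : nat) : nat :=
  addr_dist (nth [::] (onat_vertices t) i) (nth [::] (onat_vertices t) j).

Definition treeSet (g n : nat) : Type :=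
  {t : otree | osize t = n.+1 /\ (forall i, i < n -> odist t i i.+1 <= g.+1)}.

Definition quadSet (g n : nat) : Type :=
  {q : nat * seq otree * seq otree * otree |
     let: (m, L, R, M) := q in
     [/\ size L = m /\ size R = m,
         all (fun T => odepth T <= g./2) L,
         all (fun T => odepth T <= uphalf g) R,
         (if m == 0 then odepth M <= uphalf g else odepth M == uphalf g)
       & sumn (map osize L) + sumn (map osize R) + osize M = n + 1 + m]}.

Example ex1 : onat_vertices (ONode [:: ONode [:: ONode [::]]; ONode [::]])
  = [:: [:: 0; 0]; [:: 0]; [:: 1]; [::]]. Proof. by []. Qed.
Example ex2 : odist (ONode [:: ONode [:: ONode [::]]; ONode [::]]) 0 2 = 3.
Proof. by []. Qed.

From mathcomp Require Import all_boot zify.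
From Stdlib Require Import IndefiniteDescription ProofIrrelevance.

Set Implicit Arguments. Unset Strict Implicit. Unset Printing Implicit Defensive.

(* Write l = floor(g/2) and h = ceil(g/2).  The natural labeling lists the
   vertices level by level, deepest level first, so the distance condition says
   that consecutive vertices of a level, and the last vertex of level d+1 and the
   first vertex of level d, are at distance at most g+1.  Levels of depth <= h
   and the junctions with d <= l always satisfy this, so trees of depth <= h
   are admissible.  In a deeper admissible tree two consecutive vertices of depth
   h+1 lying in different root subtrees would be at distance 2h+2 > g+1, so
   exactly one child s of the root has depth >= h; the root together with the
   children left of s is a tree of depth <= l (otherwise, for odd g, the junction
   between levels h+1 and h has length 2h+1 > g+1), the root together with the
   children right of s is a tree of depth <= h, and s is again admissible.
   Peeling off these pairs (L_i, R_i) until the remaining subtree M has depth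
   <= h is a bijection; each step duplicates the root, whence n+1+m vertices. *)

Lemma half_uphalf_bounds g :
  [/\ g./2 + uphalf g = g, g./2 <= uphalf g & uphalf g <= (g./2).+1].
Proof.
rewrite uphalf_half; have := odd_double_half g; rewrite -addnn.
by case: odd => /= h; split; lia.
Qed.

Section SeqFacts.
Variable T : Type.

Lemma sorted_flatten (e : rel T) x0 (ss : seq (seq T)) :
  all (fun s => ~~ nilp s) ss ->
  sorted e (flatten ss) =
  all (sorted e) ss && sorted (fun s1 s2 => e (last x0 s1) (head x0 s2)) ss.
Proof.
elim: ss => [|[|x s] ss IH] // /andP[_ hne].
rewrite /= cat_path; case: ss hne IH => [|[|y s2] ss] // hne IH; first by rewrite /= !andbT.
have -> : path e (last x s) (flatten ((y :: s2) :: ss)) =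
  e (last x s) y && sorted e (flatten ((y :: s2) :: ss)) by [].
rewrite IH //=.
by case: (path e x s); case: (e (last x s) y); rewrite /= ?andbF.
Qed.

Lemma sorted_cat_last_head (e : rel T) x s y s' :
  sorted e ((x :: s) ++ y :: s') -> e (last x s) y.
Proof. by rewrite /= cat_path => /and3P[_ + _]. Qed.

Lemma count1_split (p : pred T) s : count p s = 1 ->
  exists ls x rs, [/\ s = ls ++ x :: rs, p x, ~~ has p ls & ~~ has p rs].
Proof.
elim: s => [|y s IH] //=; case: (boolP (p y)) => py /=.
  by rewrite add1n => -[/eqP]; rewrite -leqn0 leqNgt -has_count => hs; exists [::], y, s.
rewrite add0n => /IH [ls [x [rs [-> px hl hr]]]].
by exists (y :: ls), x, rs; rewrite /= (negbTE py).
Qed.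

Lemma cat_cons_uniq (p : pred T) ls1 x1 rs1 ls2 x2 rs2 :
  ~~ has p ls1 -> ~~ has p ls2 -> p x1 -> p x2 ->
  ls1 ++ x1 :: rs1 = ls2 ++ x2 :: rs2 -> [/\ ls1 = ls2, x1 = x2 & rs1 = rs2].
Proof.
elim: ls1 ls2 => [|y ls1 IH] [|z ls2] //=.
- by move=> _ _ _ _ [-> ->].
- by move=> _ /norP[+ _] p1 _ [e _]; rewrite -e p1.
- by move=> /norP[+ _] _ _ p2 [e _]; rewrite e p2.
- by move=> /norP[_ h1] /norP[_ h2] p1 p2 [-> /(IH _ h1 h2 p1 p2) [-> -> ->]].
Qed.

End SeqFacts.

Lemma odepth_leq ts k : (odepth (ONode ts) <= k) = all (fun t => odepth t < k) ts.
Proof. by elim: ts => //= t ts IH; rewrite geq_max IH. Qed.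

Lemma odepth_gtn ts k : (k < odepth (ONode ts)) = has (fun t => k <= odepth t) ts.
Proof.
rewrite ltnNge odepth_leq -has_predC; apply: eq_has => t.
by rewrite /= -leqNgt.
Qed.

Lemma odepth_cons x xs : odepth (ONode (x :: xs)) = maxn (odepth x).+1 (odepth (ONode xs)).
Proof. by []. Qed.

Lemma odepth_cat xs ys :
  odepth (ONode (xs ++ ys)) = maxn (odepth (ONode xs)) (odepth (ONode ys)).
Proof. by elim: xs => [|x xs IH]; rewrite ?max0n // cat_cons !odepth_cons IH maxnA. Qed.

Fixpoint forest_level (i : nat) (ts : seq otree) (d : nat) : seq (seq nat) :=
  if ts is t :: ts' then map (cons i) (olevel t d) ++ forest_level i.+1 ts' d else [::].

Lemma olevelS ts d : olevel (ONode ts) d.+1 = forest_level 0 ts d.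
Proof. by rewrite /=; elim: ts 0 => //= t ts IH i; rewrite IH. Qed.

Lemma forest_level_cat i xs ys d :
  forest_level i (xs ++ ys) d = forest_level i xs d ++ forest_level (i + size xs) ys d.
Proof. by elim: xs i => [|x xs IH] i /=; rewrite ?addn0 // IH catA addSnnS. Qed.

Lemma olevel_cat_cons ls s rs d :
  olevel (ONode (ls ++ s :: rs)) d.+1 =
  forest_level 0 ls d ++ map (cons (size ls)) (olevel s d) ++ forest_level (size ls).+1 rs d.
Proof. by rewrite olevelS forest_level_cat. Qed.

Lemma size_olevel d t a : a \in olevel t d -> size a = d.
Proof.
elim: d t a => [|d IH] [ts] a; first by rewrite inE => /eqP->.
rewrite olevelS; elim: ts 0 => [|t ts IHts] i //=.
by rewrite mem_cat => /orP[/mapP[b /IH <- ->] | /IHts].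
Qed.

Lemma forest_level_nilp i ts d :
  nilp (forest_level i ts d) = all (fun t => nilp (olevel t d)) ts.
Proof. by elim: ts i => //= t ts IH i; rewrite cat_nilp IH /nilp size_map. Qed.

Lemma olevel_nilp t d : nilp (olevel t d) = (odepth t < d).
Proof.
elim: d t => [|d IH] [ts] //; rewrite olevelS forest_level_nilp ltnS odepth_leq.
exact: eq_all.
Qed.

Lemma sum_size_olevel N t : odepth t < N -> \sum_(d < N) size (olevel t d) = osize t.
Proof.
elim: N t => [|N IH] [ts] //; rewrite ltnS odepth_leq => hts.
rewrite big_ord_recl [X in X + _]/= add1n; congr S.
have sum_forest i us : all (fun t => odepth t < N) us ->
    \sum_(d < N) size (forest_level i us d) = sumn (map osize us).
  elim: us i => [|u us IHus] i /=; first by rewrite big1.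
  case/andP=> hu hus; rewrite -(IH u hu) -(IHus i.+1 hus) -big_split.
  by apply: eq_bigr => d _; rewrite size_cat size_map.
by rewrite -(sum_forest 0 ts hts); apply: eq_bigr => d _; rewrite lift0 olevelS.
Qed.

Lemma size_onat_vertices t : size (onat_vertices t) = osize t.
Proof.
rewrite size_flatten /shape map_rev sumn_rev -map_comp sumnE big_map.
rewrite -(sum_size_olevel (ltnSn (odepth t))).
by rewrite -(big_mkord xpredT (fun d => size (olevel t d))) /index_iota subn0.
Qed.

Lemma addr_dist_cons2 k a b : addr_dist (k :: a) (k :: b) = addr_dist a b.
Proof. by rewrite /addr_dist /= eqxx doubleS addSn addnS !subSS. Qed.

Lemma addr_dist_cons_neq k j a b :
  k != j -> addr_dist (k :: a) (j :: b) = (size a + size b).+2.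
Proof. by move=> hkj; rewrite /addr_dist /= (negbTE hkj) subn0 addSn addnS. Qed.

Definition close (g : nat) (a b : seq nat) := addr_dist a b <= g.+1.

Lemma close_cons2 g k a b : close g (k :: a) (k :: b) = close g a b.
Proof. by rewrite /close addr_dist_cons2. Qed.

Lemma sorted_close_cons g k s : sorted (close g) (map (cons k) s) = sorted (close g) s.
Proof. by rewrite sorted_map; apply: eq_sorted => a b; rewrite /= close_cons2. Qed.

Lemma close_short g a b : size a + size b <= g.+1 -> close g a b.
Proof. exact/leq_trans/leq_subr. Qed.

Lemma close_forest_level g k x i ts d y : y \in forest_level i ts d ->
  (k < i) || (i + size ts <= k) -> close g (k :: x) y = (size x + d < g).
Proof.
elim: ts i => [|t ts IH] i //=; rewrite mem_cat => /orP[/mapP[b hb ->] hk|hy hk].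
  by rewrite /close addr_dist_cons_neq ?(size_olevel hb) //; apply: contraTneq hk => ->; lia.
by apply: IH hy _; lia.
Qed.

Definition admissible (g : nat) (t : otree) := sorted (close g) (onat_vertices t).

Lemma admissible_odist g n t : osize t = n.+1 ->
  admissible g t <-> forall i, i < n -> odist t i i.+1 <= g.+1.
Proof.
move=> ht; rewrite /admissible; split.
  by move=> /(sortedP [::]) adm i hi; apply: adm; rewrite size_onat_vertices ht.
by move=> h; apply/(sortedP [::]) => i; rewrite size_onat_vertices ht ltnS; apply: h.
Qed.

Lemma admissible_levels g t : admissible g t <->
  (forall d, sorted (close g) (olevel t d)) /\
  (forall d, d < odepth t -> close g (last [::] (olevel t d.+1)) (head [::] (olevel t d))).
Proof.
have levels_ne : all (fun s => ~~ nilp s) (rev (mkseq (olevel t) (odepth t).+1)).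
  by rewrite all_rev all_map; apply/allP => d; rewrite mem_iota /= olevel_nilp -leqNgt.
rewrite /admissible /onat_vertices (sorted_flatten _ [::] levels_ne) all_rev rev_sorted.
split.
- case/andP=> /allP sorted_levels /(sortedP [::]) junctions; split.
    move=> d; case: (leqP d (odepth t)) => hd.
      by apply: sorted_levels; apply: map_f; rewrite mem_iota.
    by move: hd; rewrite -olevel_nilp => /nilP->.
  move=> d hd; have := junctions d; rewrite size_mkseq !nth_mkseq //; last exact: ltnW.
  exact.
- case=> sorted_levels junctions; apply/andP; split.
    by apply/allP => _ /mapP[d _ ->].
  apply/(sortedP [::]) => d; rewrite size_mkseq ltnS => hd.
  by rewrite !nth_mkseq //; [apply: junctions | apply: ltnW].
Qed.

Lemma sorted_close_olevel g t d : d <= uphalf g -> sorted (close g) (olevel t d).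
Proof.
rewrite geq_uphalf_double => hd; apply/(sortedP [::]) => i hi.
by apply: close_short; rewrite !(size_olevel (mem_nth _ _)) ?(ltnW hi) //; lia.
Qed.

Lemma size_last_olevel t d : size (last [::] (olevel t d)) <= d.
Proof. by case E: (olevel t d) => [|a s] //=; rewrite (@size_olevel d t) // E mem_last. Qed.

Lemma size_head_olevel t d : size (head [::] (olevel t d)) <= d.
Proof. by case E: (olevel t d) => [|a s] //=; rewrite (@size_olevel d t) // E mem_head. Qed.

Lemma close_junction_low g t d : d <= g./2 ->
  close g (last [::] (olevel t d.+1)) (head [::] (olevel t d)).
Proof.
move=> hd; apply: close_short.
have := size_last_olevel t d.+1; have := size_head_olevel t d.
have := half_uphalf_bounds g; lia.
Qed.

Lemma admissible_shallow g t : odepth t <= uphalf g -> admissible g t.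
Proof.
move=> ht; apply/admissible_levels; split => d.
  case: (leqP d (uphalf g)) => hd; first exact: sorted_close_olevel.
  by move: (leq_ltn_trans ht hd); rewrite -olevel_nilp => /nilP->.
by move=> hd; apply: close_junction_low; have := half_uphalf_bounds g; lia.
Qed.

Lemma sorted_forest_level_deep g i ts :
  sorted (close g) (forest_level i ts (uphalf g)) ->
  count (fun t => uphalf g <= odepth t) ts <= 1.
Proof.
elim: ts i => //= t ts IH i hs; have [_ /IH hts] := cat_sorted2 hs.
case: (leqP (uphalf g) (odepth t)) => ht /=; last by rewrite add0n.
rewrite add1n ltnS leqNgt -has_count; apply/negP => deep_ts.
have: ~~ nilp (forest_level i.+1 ts (uphalf g)).
  rewrite forest_level_nilp -has_predC; apply: sub_has deep_ts => u.
  by rewrite /= olevel_nilp -leqNgt.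
have: ~~ nilp (olevel t (uphalf g)) by rewrite olevel_nilp -leqNgt.
case E1: (olevel t (uphalf g)) => [|x X] // _.
case E2: (forest_level i.+1 ts (uphalf g)) => [|y Y] // _.
rewrite E1 E2 map_cons in hs; have := sorted_cat_last_head hs; rewrite last_map.
rewrite (@close_forest_level g i _ i.+1 ts (uphalf g)) ?E2 ?mem_head ?leqnn //.
rewrite (@size_olevel (uphalf g) t) ?E1 ?mem_last //.
have := half_uphalf_bounds g; lia.
Qed.

Lemma admissible_deep_children g ts :
  admissible g (ONode ts) -> count (fun t => uphalf g <= odepth t) ts <= 1.
Proof.
case/admissible_levels => /(_ (uphalf g).+1) + _.
by rewrite olevelS; apply: sorted_forest_level_deep.
Qed.

Lemma forest_level_shallow i ts e : odepth (ONode ts) <= e -> forest_level i ts e = [::].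
Proof.
rewrite odepth_leq => hts; apply/nilP; rewrite forest_level_nilp.
by apply: sub_all hts => t; rewrite /= olevel_nilp.
Qed.

Lemma olevel_spine_high ls s rs e :
  odepth (ONode ls) <= e -> odepth (ONode rs) <= e ->
  olevel (ONode (ls ++ s :: rs)) e.+1 = map (cons (size ls)) (olevel s e).
Proof. by move=> hl hr; rewrite olevel_cat_cons !forest_level_shallow ?cats0. Qed.

Lemma head_olevel_spine ls s rs e : odepth (ONode ls) <= e -> e <= odepth s ->
  head [::] (olevel (ONode (ls ++ s :: rs)) e.+1) = size ls :: head [::] (olevel s e).
Proof.
move=> hl hs; rewrite olevel_cat_cons forest_level_shallow //.
have: ~~ nilp (olevel s e) by rewrite olevel_nilp -leqNgt.
by case: (olevel s e).
Qed.

Lemma close_junction_spine g ls s rs e :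
  odepth (ONode ls) <= e -> odepth (ONode rs) <= e.+1 -> e < odepth s ->
  close g (last [::] (olevel (ONode (ls ++ s :: rs)) e.+2))
          (head [::] (olevel (ONode (ls ++ s :: rs)) e.+1)) =
  close g (last [::] (olevel s e.+1)) (head [::] (olevel s e)).
Proof.
move=> hl hr hs.
rewrite olevel_spine_high ?(leq_trans hl (leqnSn e)) // head_olevel_spine ?(ltnW hs) //.
have: ~~ nilp (olevel s e.+1) by rewrite olevel_nilp -leqNgt.
by case: (olevel s e.+1) => //= a X _; rewrite last_map close_cons2.
Qed.

Lemma admissible_spine_node g ls s rs :
  odepth (ONode ls) <= g./2 -> odepth (ONode rs) <= uphalf g -> uphalf g <= odepth s ->
  admissible g s -> admissible g (ONode (ls ++ s :: rs)).
Proof.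
move=> hl hr hs /admissible_levels[sorted_s junction_s].
have [_ hlh hhl] := half_uphalf_bounds g.
have depth_node : odepth (ONode (ls ++ s :: rs)) = (odepth s).+1.
  by rewrite odepth_cat odepth_cons; lia.
apply/admissible_levels; split => [[|e] //|d].
  case: (leqP e.+1 (uphalf g)) => he; first exact: sorted_close_olevel.
  by rewrite olevel_spine_high ?sorted_close_cons //; lia.
rewrite depth_node => hd; case: (leqP d g./2) => hdl; first exact: close_junction_low.
by case: d hd hdl => [|e] // hd hdl; rewrite close_junction_spine ?junction_s //; lia.
Qed.

Lemma admissible_spine_child g ls s rs :
  odepth (ONode ls) <= uphalf g -> odepth (ONode rs) <= uphalf g ->
  admissible g (ONode (ls ++ s :: rs)) -> admissible g s.
Proof.
move=> hl hr /admissible_levels[sorted_t junction_t].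
have [_ hlh hhl] := half_uphalf_bounds g.
apply/admissible_levels; split => [e|e he].
  have := sorted_t e.+1; rewrite olevel_cat_cons => /cat_sorted2[_ /cat_sorted2[+ _]].
  by rewrite sorted_close_cons.
case: (leqP e g./2) => hel; first exact: close_junction_low.
have hT : e.+1 < odepth (ONode (ls ++ s :: rs)) by rewrite odepth_cat odepth_cons; lia.
by rewrite -(@close_junction_spine g ls s rs e) ?junction_t //; lia.
Qed.

Lemma admissible_spine_left g ls s rs :
  odepth (ONode ls) <= uphalf g -> odepth (ONode rs) <= uphalf g -> uphalf g <= odepth s ->
  admissible g (ONode (ls ++ s :: rs)) -> odepth (ONode ls) <= g./2.
Proof.
move=> hl hr hs /admissible_levels[_ junction_t]; rewrite leqNgt; apply/negP => hlong.
have [hlg hlh hhl] := half_uphalf_bounds g.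
have hh : uphalf g = (g./2).+1 by lia.
have /junction_t : uphalf g < odepth (ONode (ls ++ s :: rs)).
  by rewrite odepth_cat odepth_cons; lia.
rewrite olevel_spine_high // {2}hh olevel_cat_cons.
have: ~~ nilp (forest_level 0 ls g./2).
  rewrite forest_level_nilp -has_predC; move: hlong; rewrite odepth_gtn.
  by apply: sub_has => t; rewrite /= olevel_nilp -leqNgt.
have: ~~ nilp (olevel s (uphalf g)) by rewrite olevel_nilp -leqNgt.
case E1: (olevel s (uphalf g)) => [|x X] // _.
case E2: (forest_level 0 ls g./2) => [|y Y] // _.
rewrite /= last_map (@close_forest_level g (size ls) _ 0 ls g./2) ?E2 ?mem_head //;
  last by rewrite add0n leqnn orbT.
by rewrite (@size_olevel (uphalf g) s) ?E1 ?mem_last //; lia.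
Qed.

Lemma admissible_split g ts :
  admissible g (ONode ts) -> uphalf g < odepth (ONode ts) ->
  exists ls s rs, [/\ ts = ls ++ s :: rs, odepth (ONode ls) <= g./2,
    odepth (ONode rs) <= uphalf g, uphalf g <= odepth s & admissible g s].
Proof.
move=> adm; rewrite odepth_gtn has_count => deep.
have /count1_split[ls [s [rs [Ets hs]]]] : count (fun t => uphalf g <= odepth t) ts = 1.
  by have := admissible_deep_children adm; lia.
rewrite -!odepth_gtn -!leqNgt => hl hr; subst ts.
exists ls, s, rs; split => //; first exact: admissible_spine_left adm.
exact: admissible_spine_child adm.
Qed.

Fixpoint spine (L R : seq otree) (M : otree) : otree :=
  match L, R with
  | ONode ls :: L', ONode rs :: R' => ONode (ls ++ spine L' R' M :: rs)
  | _, _ => M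
  end.

Lemma spine_cons ls L rs R M :
  spine (ONode ls :: L) (ONode rs :: R) M = ONode (ls ++ spine L R M :: rs).
Proof. by []. Qed.

Definition quad_ok (g : nat) (L R : seq otree) (M : otree) :=
  [/\ size L = size R, all (fun t => odepth t <= g./2) L,
      all (fun t => odepth t <= uphalf g) R &
      if size L == 0 then odepth M <= uphalf g else odepth M == uphalf g].

Lemma quad_ok_nil g R M : quad_ok g [::] R M <-> R = [::] /\ odepth M <= uphalf g.
Proof. by case: R => [|r R]; split=> [[]|[]]. Qed.

Lemma quad_ok_cons g l L r R M : quad_ok g (l :: L) (r :: R) M <->
  [/\ quad_ok g L R M, odepth l <= g./2, odepth r <= uphalf g & odepth M = uphalf g].
Proof.
split=> [[/= [hs] /andP[hl hL] /andP[hr hR] /eqP hM]|[[hs hL hR _] hl hr hM]].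
  by split=> //; split=> //; rewrite hM; case: (size L == 0).
by split; rewrite /= ?hs ?hl ?hL ?hr ?hR ?hM.
Qed.

Lemma odepth_spine g L R M : quad_ok g L R M -> odepth (spine L R M) = size L + odepth M.
Proof.
have [_ hlh _] := half_uphalf_bounds g.
elim: L R => [|[ls] L IH] [|[rs] R] //; first by case.
case/quad_ok_cons => q hl hr hM.
rewrite spine_cons odepth_cat odepth_cons (IH R q) -[size (_ :: _)]/(size L).+1; lia.
Qed.

Lemma odepth_spine_gt g L R M :
  quad_ok g L R M -> (uphalf g < odepth (spine L R M)) = (0 < size L).
Proof.
move=> q; rewrite (odepth_spine q); case: q => _ _ _.
by case: (size L) => [|k] /=; [rewrite ltnNge => -> | move/eqP->; lia].
Qed.

Lemma osize_spine L R M : size L = size R ->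
  osize (spine L R M) + size L = sumn (map osize L) + sumn (map osize R) + osize M.
Proof.
elim: L R => [|[ls] L IH] [|[rs] R] // hs; first by rewrite /= addn0.
move: hs => [/IH]; rewrite spine_cons /= map_cat sumn_cat /=; lia.
Qed.

Lemma admissible_spine g L R M : quad_ok g L R M -> admissible g (spine L R M).
Proof.
elim: L R => [|[ls] L IH] [|[rs] R]; try by case.
  by case/quad_ok_nil => _; apply: admissible_shallow.
case/quad_ok_cons => q hl hr hM; rewrite spine_cons.
by apply: admissible_spine_node => //; [rewrite (odepth_spine q) hM leq_addl | exact: IH].
Qed.

Lemma spine_inj g L1 R1 M1 L2 R2 M2 : quad_ok g L1 R1 M1 -> quad_ok g L2 R2 M2 ->
  spine L1 R1 M1 = spine L2 R2 M2 -> [/\ L1 = L2, R1 = R2 & M1 = M2].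
Proof.
have [_ hlh _] := half_uphalf_bounds g.
have shallow ls : odepth (ONode ls) <= g./2 -> ~~ has (fun t => uphalf g <= odepth t) ls.
  by rewrite -odepth_gtn -leqNgt => /leq_trans; apply.
have deep L R M : quad_ok g L R M -> odepth M = uphalf g -> uphalf g <= odepth (spine L R M).
  by move=> q hM; rewrite (odepth_spine q) hM leq_addl.
elim: L1 R1 L2 R2 => [|[ls1] L1 IH] R1 [|[ls2] L2] R2 q1 q2 E.
- by case/quad_ok_nil: q1 => -> _; case/quad_ok_nil: q2 => -> _.
- by have := odepth_spine_gt q1; rewrite E (odepth_spine_gt q2).
- by have := odepth_spine_gt q2; rewrite -E (odepth_spine_gt q1).
case: R1 R2 q1 q2 E => [|[rs1] R1] [|[rs2] R2] q1 q2; try by [case: q1 | case: q2].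
rewrite !spine_cons => -[E].
case/quad_ok_cons: q1 => q1 hl1 _ hM1; case/quad_ok_cons: q2 => q2 hl2 _ hM2.
have [-> es ->] := cat_cons_uniq (shallow _ hl1) (shallow _ hl2)
  (deep _ _ _ q1 hM1) (deep _ _ _ q2 hM2) E.
by have [-> -> ->] := IH _ _ _ q1 q2 es.
Qed.

Lemma spine_surj g t : admissible g t -> exists L R M, quad_ok g L R M /\ spine L R M = t.
Proof.
move: (ltnSn (odepth t)); move: {2}(odepth t).+1 => N.
elim: N t => [|N IH] // [ts] hN adm.
case: (leqP (odepth (ONode ts)) (uphalf g)) => hdeep.
  by exists [::], [::], (ONode ts); split => //; apply/quad_ok_nil.
have [ls [s [rs [Ets hl hr hs adm_s]]]] := admissible_split adm hdeep; subst ts.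
have [|L [R [M [q Es]]]] := IH s _ adm_s.
  by move: hN; rewrite odepth_cat odepth_cons; lia.
exists (ONode ls :: L), (ONode rs :: R), M; split; last by rewrite spine_cons Es.
apply/quad_ok_cons; split => //.
move: hs; rewrite -Es (odepth_spine q); case: q => _ _ _.
by case: (size L =P 0) => [-> hM|_ /eqP //]; lia.
Qed.

Definition quad_spine (q : nat * seq otree * seq otree * otree) : otree :=
  let: (_, L, R, M) := q in spine L R M.

Lemma quad_spine_spec g n (q : quadSet g n) :
  osize (quad_spine (sval q)) = n.+1 /\
  (forall i, i < n -> odist (quad_spine (sval q)) i i.+1 <= g.+1).
Proof.
case: q => [[[[m L] R] M] [[hL hR] aL aR hM hsum]] /=.
have q : quad_ok g L R M by split; rewrite ?hL ?hR.
have hsize : osize (spine L R M) = n.+1.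
  by have := osize_spine M (etrans hL (esym hR)); lia.
by split=> //; apply/(admissible_odist g hsize)/admissible_spine.
Qed.

Definition tree_of_quad g n (q : quadSet g n) : treeSet g n :=
  exist _ (quad_spine (sval q)) (quad_spine_spec q).

Lemma tree_of_quad_inj g n : injective (@tree_of_quad g n).
Proof.
move=> [[[[m1 L1] R1] M1] p1] [[[[m2 L2] R2] M2] p2] /(f_equal sval) /= E.
have [[hL1 hR1] aL1 aR1 hM1 _] := p1; have [[hL2 hR2] aL2 aR2 hM2 _] := p2.
have q1 : quad_ok g L1 R1 M1 by split; rewrite ?hL1 ?hR1.
have q2 : quad_ok g L2 R2 M2 by split; rewrite ?hL2 ?hR2.
have [EL ER EM] := spine_inj q1 q2 E.
apply: (eq_sig_hprop (fun _ => proof_irrelevance _)).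
by rewrite /= -hL1 -hL2 EL ER EM.
Qed.

Lemma tree_of_quad_surj g n (t : treeSet g n) : exists q, tree_of_quad q = t.
Proof.
case: t => t [hsize hdist].
have [L [R [M [[hLR aL aR hM] Et]]]] := spine_surj ((admissible_odist g hsize).2 hdist).
have hsum : sumn (map osize L) + sumn (map osize R) + osize M = n + 1 + size L.
  by have := osize_spine M hLR; rewrite Et hsize; lia.
exists (exist _ (size L, L, R, M) (And5 (conj erefl (esym hLR)) aL aR hM hsum)).
by apply: (eq_sig_hprop (fun _ => proof_irrelevance _)); rewrite /= Et.
Qed.

Lemma inj_surj_bijective (A B : Type) (f : A -> B) :
  injective f -> (forall b, exists a, f a = b) -> bijective f.
Proof.
move=> f_inj f_surj.
pose pick b := constructive_indefinite_description _ (f_surj b).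
have pickK : cancel (fun b => proj1_sig (pick b)) f by move=> b; exact: proj2_sig (pick b).
by exists (fun b => proj1_sig (pick b)) => // a; apply: f_inj; rewrite pickK.
Qed.

Theorem lemma3p10 (g n : nat) :
  exists f : treeSet g n -> quadSet g n, bijective f.
Proof.
have [f fK Kf] := inj_surj_bijective (@tree_of_quad_inj g n) (@tree_of_quad_surj g n).
by exists f; exists (@tree_of_quad g n).
Qed.
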